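(* Let $M > K \ge 1$ and let $\mathbf{R} \in \mathbb{C}^{M\times M}$ be a Hermitian positive semidefinite matrix (the sample covariance matrix) with eigenvalue decomposition $\mathbf{R} = \mathbf{U}\boldsymbol\Lambda\mathbf{U}^{\dagger} + \mathbf{G}\boldsymbol\Sigma\mathbf{G}^{\dagger}$, where $[\mathbf{U}\ \mathbf{G}]$ is unitary, $\mathbf{U}\in\mathbb{C}^{M\times K}$ contains eigenvectors associated with the $K$ largest eigenvalues (collected in the diagonal matrix $\boldsymbol\Lambda$) and $\mathbf{G}\in\mathbb{C}^{M\times(M-K)}$ contains the remaining eigenvectors (eigenvalues in the diagonal matrix $\boldsymbol\Sigma$). Let $\mathbf{R}^{1/2}\in\mathbb{C}^{M\times M}$ be any matrix with $\mathbf{R}^{1/2}(\mathbf{R}^{1/2})^{\dagger}=\mathbf{R}$. Fix an iteration index $k\ge 0$ and previously selected angles $\widehat{\boldsymbol\Theta}_k=[\widehat\theta_1,\dots,\widehat\theta_k]$ such that $\mathbf{A}(\widehat{\boldsymbol\Theta}_k)$ has full column rank, and set $\mathbf{P}^{\perp}_k = \mathbf{I}_M - \mathbf{A}(\widehat{\boldsymbol\Theta}_k)\mathbf{A}(\widehat{\boldsymbol\Theta}_k)^{+}$ (with $\mathbf{P}^\perp_0=\mathbf{I}_M$), $\mathbf{R}^{1/2}_k=\mathbf{P}^{\perp}_k\mathbf{R}^{1/2}$, $\mathbf{U}_k=\mathbf{P}^{\perp}_k\mathbf{U}$, $\mathbf{G}_k=\mathbf{P}^{\perp}_k\mathbf{G}$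 and $\mathbf{a}_k(\theta)=\mathbf{P}^{\perp}_k\mathbf{a}(\theta)$. Then, over any set of candidate angles $\widetilde\theta_{k+1}$, the OMP selection step $$\widehat\theta_{k+1}^{\mathrm{OMP}}=\arg\max_{\widetilde\theta_{k+1}}\big\|(\mathbf{R}^{1/2}_k)^{\dagger}\mathbf{a}(\widetilde\theta_{k+1})\big\|_2^2$$ is equivalently $$\widehat\theta_{k+1}^{\mathrm{OMP}}=\arg\max_{\widetilde\theta_{k+1}}\big\|(\mathbf{U}_k\boldsymbol\Lambda^{1/2}+\mathbf{G}_k\boldsymbol\Sigma^{1/2})^{\dagger}\mathbf{a}(\widetilde\theta_{k+1})\big\|_2^2,$$ and the OLS selection step $$\widehat\theta_{k+1}^{\mathrm{OLS}}=\arg\max_{\widetilde\theta_{k+1}}\frac{\big\|(\mathbf{R}^{1/2}_k)^{\dagger}\mathbf{a}(\widetilde\theta_{k+1})\big\|_2^2}{\|\mathbf{a}_k(\widetilde\theta_{k+1})\|_2^2}$$ is equivalently $$\widehat\theta_{k+1}^{\mathrm{OLS}}=\arg\max_{\widetilde\theta_{k+1}}\frac{\big\|(\mathbf{U}_k\boldsymbol\Lambda^{1/2}+\mathbf{G}_k\boldsymbol\Sigma^{1/2})^{\dagger}\mathbf{a}(\widetilde\theta_{k+1})\big\|_2^2}{\|\mathbf{a}_k(\widetilde\theta_{k+1})\|_2^2}.$$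
   Context: A uniform linear array of $M$ antennas with spacing $\Delta_d$ and wavenumber $k_c$ has steering vector $\mathbf{a}(\theta)=[1,\ e^{jk_c\Delta_d\sin\theta},\dots,e^{jk_c\Delta_d\sin\theta(M-1)}]^{\mathrm T}\in\mathbb{C}^M$ for $\theta\in[-\pi/2,\pi/2]$, and for $\boldsymbol\Theta=[\theta_1,\dots,\theta_k]$, $\mathbf{A}(\boldsymbol\Theta)=[\mathbf{a}(\theta_1)\cdots\mathbf{a}(\theta_k)]$. $\dagger$ denotes Hermitian transpose, $^{+}$ the Moore–Penrose pseudoinverse, and $\boldsymbol\Lambda^{1/2},\boldsymbol\Sigma^{1/2}$ the entrywise square roots of the diagonal eigenvalue matrices. In the OLS step the candidates are those for which $\mathbf{a}_k(\widetilde\theta_{k+1})\neq 0$. *)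

From HB Require Import structures.
From mathcomp Require Import all_boot all_order all_algebra.
From mathcomp Require Import reals trigo.
From mathcomp Require Import complex.
Set Implicit Arguments. Unset Strict Implicit. Unset Printing Implicit Defensive.
Import Order.TTheory GRing.Theory Num.Theory.
Local Open Scope ring_scope.

Section Defs.
Variable R : realType.
Local Notation C := (complex R).

Definition hadj m n (A : 'M[C]_(m, n)) : 'M[C]_(n, m) :=
  \matrix_(i, j) conjc (A j i).

Definition is_pinv m n (A : 'M[C]_(m, n)) (X : 'M[C]_(n, m)) : Prop :=
  [/\ A *m X *m A = A, X *m A *m X = X,
      hadj (A *m X) = A *m X & hadj (X *m A) = X *m A].

Definition expj (x : R) : C := Complex (cos x) (sin x).

(* steering vector a(theta) of a ULA with M antennas, spacing Dd, wavenumber kc *)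
Definition steer (M : nat) (kc Dd : R) (theta : R) : 'cV[C]_M :=
  \col_(m < M) expj (kc * Dd * sin theta * (m%:R)).

Definition steer_mx (M k : nat) (kc Dd : R) (Th : 'I_k -> R) : 'M[C]_(M, k) :=
  \matrix_(m, i) steer M kc Dd (Th i) m ord0.

Definition norm2 n (v : 'cV[C]_n) : R :=
  \sum_(i < n) (complex.Re (v i ord0) ^+ 2 + complex.Im (v i ord0) ^+ 2).

Definition rdiag n (d : 'I_n -> R) : 'M[C]_n :=
  diag_mx (\row_i (Complex (d i) 0)).

Definition rdiag_sqrt n (d : 'I_n -> R) : 'M[C]_n :=
  rdiag (fun i => Num.sqrt (d i)).

Definition argmax_set (f : R -> R) (S : R -> Prop) : R -> Prop :=
  fun t => S t /\ forall t', S t' -> f t' <= f t.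

End Defs.

From HB Require Import structures.
From mathcomp Require Import all_boot all_order all_algebra.
From mathcomp Require Import reals trigo.
From mathcomp Require Import complex.
Set Implicit Arguments. Unset Strict Implicit. Unset Printing Implicit Defensive.
Import Order.TTheory GRing.Theory Num.Theory.
Local Open Scope ring_scope.
Local Open Scope complex_scope.

(* Both objectives see R^{1/2}_k only through ||(R^{1/2}_k)^H a||^2 = a^H (R^{1/2}_k (R^{1/2}_k)^H) a,
   and R^{1/2}_k (R^{1/2}_k)^H = P_k R P_k^H.  The matrix W = [U_k Λ^{1/2}, G_k Σ^{1/2}] has the
   same Gram matrix W W^H = P_k (U Λ U^H + G Σ G^H) P_k^H, as soon as Λ and Σ are nonnegative;
   this holds because they are the diagonal of [U G]^H R [U G], with R positive semidefinite.
   So the OMP (and, after dividing by the same ||a_k||^2, the OLS) objectives coincide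
   pointwise, and hence have the same maximizers. *)

Section ComplexMatrix.
Variable R : realType.
Local Notation C := (complex R).

Lemma hadjE m n (A : 'M[C]_(m, n)) : hadj A = (map_mx conjc A)^T.
Proof. by apply/matrixP=> i j; rewrite !mxE. Qed.

Lemma hadjM m n p (A : 'M[C]_(m, n)) (B : 'M[C]_(n, p)) :
  hadj (A *m B) = hadj B *m hadj A.
Proof. by rewrite !hadjE map_mxM trmx_mul. Qed.

Lemma hadjK m n (A : 'M[C]_(m, n)) : hadj (hadj A) = A.
Proof. by apply/matrixP=> i j; rewrite !mxE conjcK. Qed.

Lemma hadj_row_mx m n1 n2 (A : 'M[C]_(m, n1)) (B : 'M[C]_(m, n2)) :
  hadj (row_mx A B) = col_mx (hadj A) (hadj B).
Proof. by rewrite !hadjE map_row_mx tr_row_mx. Qed.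

Lemma hadj_delta_mx n (j : 'I_n) :
  hadj (delta_mx j 0) = delta_mx 0 j :> 'rV[C]_n.
Proof. by apply/matrixP=> a b; rewrite !mxE conjc_nat andbC. Qed.

Lemma hadj_rdiag n (d : 'I_n -> R) : hadj (rdiag d) = rdiag d.
Proof.
apply/matrixP=> i j; rewrite !mxE eq_sym; case: eqP => [->|_].
  by rewrite !mulr1n /= oppr0.
by rewrite !mulr0n conjc0.
Qed.

Lemma rdiagM n (a b : 'I_n -> R) :
  rdiag a *m rdiag b = rdiag (fun i => a i * b i).
Proof.
rewrite /rdiag mul_diag_mx; apply/matrixP=> i j; rewrite !mxE.
case: (i == j) => /=; last by rewrite !mulr0n mulr0.
rewrite !mulr1n; apply/eqP; rewrite eq_complex /=.
by rewrite !mulr0 subr0 mul0r addr0 !eqxx.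
Qed.

Lemma rdiag_sqrt_mul_hadj n (d : 'I_n -> R) : (forall i, 0 <= d i) ->
  rdiag_sqrt d *m hadj (rdiag_sqrt d) = rdiag d.
Proof.
move=> d_ge0; rewrite /rdiag_sqrt hadj_rdiag rdiagM.
by apply/matrixP=> i j; rewrite !mxE -expr2 sqr_sqrtr.
Qed.

Lemma hadj_mul_norm2 n (v : 'cV[C]_n) : (hadj v *m v) 0 0 = (norm2 v)%:C.
Proof.
rewrite !mxE /norm2 rmorph_sum; apply: eq_bigr => i _; rewrite !mxE.
case: (v i 0) => a b /=; apply/eqP; rewrite eq_complex /=.
by rewrite !expr2 mulNr opprK mulNr [b * a]mulrC addrN !eqxx.
Qed.

Lemma norm2_hadj_mul_eq m n p (A : 'M[C]_(m, n)) (B : 'M[C]_(m, p)) (x : 'cV[C]_m) :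
  A *m hadj A = B *m hadj B -> norm2 (hadj A *m x) = norm2 (hadj B *m x).
Proof.
move=> gramAB; apply: (@complexI R); rewrite -!hadj_mul_norm2 !hadjM !hadjK.
by rewrite !mulmxA -(mulmxA _ A) -(mulmxA _ B) gramAB.
Qed.

Lemma isometry_conj_psd_diag_ge0 m n (Q : 'M[C]_(m, n)) (D : 'M[C]_n) :
  hadj Q *m Q = 1%:M ->
  (forall x : 'cV[C]_m, 0 <= (hadj x *m (Q *m D *m hadj Q) *m x) 0 0) ->
  forall j, 0 <= D j j.
Proof.
move=> Q_isometry D_psd j; have := D_psd (Q *m delta_mx j 0).
rewrite hadjM hadj_delta_mx !mulmxA -(mulmxA _ (hadj Q) Q) Q_isometry mulmx1.
by rewrite -(mulmxA _ (hadj Q) Q) Q_isometry mulmx1 -rowE -colE !mxE.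
Qed.

Lemma mul_row_block_diag_hadj m n1 n2 (U : 'M[C]_(m, n1)) (G : 'M[C]_(m, n2))
    (D1 : 'M[C]_n1) (D2 : 'M[C]_n2) :
  row_mx U G *m block_mx D1 0 0 D2 *m hadj (row_mx U G)
  = U *m D1 *m hadj U + G *m D2 *m hadj G.
Proof.
by rewrite hadj_row_mx mul_row_block !mulmx0 addr0 add0r mul_row_col.
Qed.

Lemma eigdec_psd_ge0 m n1 n2 (U : 'M[C]_(m, n1)) (G : 'M[C]_(m, n2))
    (lam : 'I_n1 -> R) (sig : 'I_n2 -> R) :
  hadj (row_mx U G) *m row_mx U G = 1%:M ->
  (forall x : 'cV[C]_m,
     0 <= (hadj x *m (U *m rdiag lam *m hadj U + G *m rdiag sig *m hadj G) *m x) 0 0) ->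
  (forall i, 0 <= lam i) /\ (forall i, 0 <= sig i).
Proof.
move=> UG_isometry psd; rewrite -mul_row_block_diag_hadj in psd.
have D_ge0 := isometry_conj_psd_diag_ge0 UG_isometry psd.
split=> i; rewrite -ler0c.
  by have := D_ge0 (lshift _ i); rewrite block_mxEul /rdiag !mxE eqxx mulr1n.
by have := D_ge0 (rshift _ i); rewrite block_mxEdr /rdiag !mxE eqxx mulr1n.
Qed.

Lemma gram_row_sqrt m n1 n2 (P : 'M[C]_m) (U : 'M[C]_(m, n1)) (G : 'M[C]_(m, n2))
    (lam : 'I_n1 -> R) (sig : 'I_n2 -> R) :
  (forall i, 0 <= lam i) -> (forall i, 0 <= sig i) ->
  let W := row_mx (P *m U *m rdiag_sqrt lam) (P *m G *m rdiag_sqrt sig) in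
  W *m hadj W = P *m (U *m rdiag lam *m hadj U + G *m rdiag sig *m hadj G) *m hadj P.
Proof.
move=> lam_ge0 sig_ge0 W; rewrite hadj_row_mx mul_row_col !hadjM !mulmxA.
rewrite -(mulmxA (P *m U)) rdiag_sqrt_mul_hadj // -(mulmxA (P *m G)).
by rewrite rdiag_sqrt_mul_hadj // mulmxDr mulmxDl !mulmxA.
Qed.

End ComplexMatrix.

Lemma argmax_set_ext (R : realType) (f g : R -> R) (S : R -> Prop) t :
  f =1 g -> argmax_set f S t <-> argmax_set g S t.
Proof. by move=> fg; split=> -[St fmax]; split=> // t' /fmax; rewrite !fg. Qed.

Theorem lemma1 (R : realType) (M K : nat) (kc Dd : R)
  (Rm : 'M[complex R]_M)
  (U : 'M[complex R]_(M, K)) (G : 'M[complex R]_(M, M - K))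
  (lam : 'I_K -> R) (sig : 'I_(M - K) -> R)
  (Rh : 'M[complex R]_M)
  (k : nat) (Th : 'I_k -> R) (Ap : 'M[complex R]_(k, M))
  (S : R -> Prop) :
  (K < M)%N -> (1 <= K)%N ->
  (* R Hermitian positive semidefinite *)
  hadj Rm = Rm ->
  (forall x : 'cV[complex R]_M, 0 <= (hadj x *m Rm *m x) ord0 ord0) ->
  (* eigenvalue decomposition R = U Lam U^H + G Sig G^H with [U G] unitary *)
  hadj (row_mx U G) *m row_mx U G = 1%:M ->
  row_mx U G *m hadj (row_mx U G) = 1%:M ->
  Rm = U *m rdiag lam *m hadj U + G *m rdiag sig *m hadj G ->
  (* Lam holds the K largest eigenvalues *)
  (forall (i : 'I_K) (j : 'I_(M - K)), sig j <= lam i) ->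
  (* any square root R^{1/2} (R^{1/2})^H = R *)
  Rh *m hadj Rh = Rm ->
  (* previously selected angles; A(Theta_k) has full column rank *)
  (forall i, - (pi / 2) <= Th i <= pi / 2) ->
  \rank (steer_mx M kc Dd Th) = k ->
  is_pinv (steer_mx M kc Dd Th) Ap ->
  (* candidate angles *)
  (forall t, S t -> - (pi / 2) <= t <= pi / 2) ->
  let Pk := 1%:M - steer_mx M kc Dd Th *m Ap in
  let Rhk := Pk *m Rh in
  let Uk := Pk *m U in
  let Gk := Pk *m G in
  let ak t := Pk *m steer M kc Dd t in
  let W := row_mx (Uk *m rdiag_sqrt lam) (Gk *m rdiag_sqrt sig) in
  let fOMP t := norm2 (hadj Rhk *m steer M kc Dd t) in
  let gOMP t := norm2 (hadj W *m steer M kc Dd t) in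
  let SOLS t := S t /\ ak t != 0 in
  (forall t, argmax_set fOMP S t <-> argmax_set gOMP S t) /\
  (forall t, argmax_set (fun t => fOMP t / norm2 (ak t)) SOLS t <->
             argmax_set (fun t => gOMP t / norm2 (ak t)) SOLS t).
Proof.
(* Only positive semidefiniteness, [U G]^H [U G] = I and the two factorizations of R
   matter: the argument works for an arbitrary matrix in place of P_k. *)
move=> _ _ _ Rm_psd UG_isometry _ Rm_eigdec _ Rh_sqrt _ _ _ _.
move=> Pk Rhk Uk Gk ak W fOMP gOMP SOLS.
rewrite Rm_eigdec in Rm_psd Rh_sqrt.
have [lam_ge0 sig_ge0] := eigdec_psd_ge0 UG_isometry Rm_psd.
have gram_eq : Rhk *m hadj Rhk = W *m hadj W.
  by rewrite gram_row_sqrt // hadjM mulmxA -(mulmxA Pk) Rh_sqrt.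
have fOMP_gOMP : fOMP =1 gOMP by move=> t; apply: norm2_hadj_mul_eq.
by split=> t; apply: argmax_set_ext => t'; rewrite fOMP_gOMP.
Qed.
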